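(* Let $r\in\mathbb{R}$ be a root of $a_nx^n+\dots+a_1x+a_0$ with $a_0,\dots,a_n\in\mathbb{Z}$, $a_n\neq0$. Let $\alpha=k_1/k_2<r<\beta=l_1/l_2$ be rationals ($k_1,l_1\in\mathbb{Z}$, $k_2,l_2\in\mathbb{Z}\setminus\{0\}$) such that the polynomial has no root in $[\alpha,\beta]$ other than $r$, and let $a=\max\{|a_0|,\dots,|a_n|,|k_1|,|k_2|,|l_1|,|l_2|\}$. Then the finite set $$A=\Big\{\sum_{i=0}^n b_ir^i: b_i\in\mathbb{Z}\cap[-a,a]\Big\}\cup\{\alpha,\ r-\alpha,\ \sqrt{r-\alpha},\ \beta,\ \beta-r,\ \sqrt{\beta-r}\}$$ has the property that every map $f:A\to\mathbb{R}$ satisfying (1)–(3) satisfies $f(r)=r$.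
   Context: For a finite set $A\subseteq\mathbb{R}$, conditions (1)–(3) on a map $f:A\to\mathbb{R}$ are: (1) if $1\in A$ then $f(1)=1$; (2) if $a,b\in A$ and $a+b\in A$ then $f(a+b)=f(a)+f(b)$; (3) if $a,b\in A$ and $a\cdot b\in A$ then $f(a\cdot b)=f(a)\cdot f(b)$. *)

From Stdlib Require Import Reals ZArith List.
Open Scope R_scope.

(* Conditions (1)-(3) for a map f : A -> R, A given as a predicate on R.
   f is represented by a total function R -> R; only its values on A matter. *)
Definition satisfies_conds (A : R -> Prop) (f : R -> R) : Prop :=
  (A 1 -> f 1 = 1) /\
  (forall x y, A x -> A y -> A (x + y) -> f (x + y) = f x + f y) /\
  (forall x y, A x -> A y -> A (x * y) -> f (x * y) = f x * f y).

Definition zpoly_eval (n : nat) (c : nat -> Z) (x : R) : R :=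
  sum_f_R0 (fun i => IZR (c i) * x ^ i) n.

Definition height_bound (n : nat) (c : nat -> Z) (k1 k2 l1 l2 : Z) : Z :=
  fold_right Z.max (Z.max (Z.max (Z.abs k1) (Z.abs k2)) (Z.max (Z.abs l1) (Z.abs l2)))
    (map (fun i => Z.abs (c i)) (seq 0 (S n))).

Definition setA (n : nat) (bnd : Z) (r alpha beta : R) (x : R) : Prop :=
  (exists b : nat -> Z,
      (forall i, (i <= n)%nat -> (- bnd <= b i <= bnd)%Z) /\
      x = sum_f_R0 (fun i => IZR (b i) * r ^ i) n)
  \/ x = alpha \/ x = r - alpha \/ x = sqrt (r - alpha)
  \/ x = beta \/ x = beta - r \/ x = sqrt (beta - r).

(** A map satisfying (1)-(3) on [A] fixes every integer of absolute value at
    most [a], hence the rationals [alpha] and [beta]; it commutes with the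
    evaluation of the polynomial, so [f r] is again a root; and it is monotone
    along [alpha <= r] and [r <= beta], because [f (r - alpha)] and
    [f (beta - r)] are squares of [f (sqrt (r - alpha))] and [f (sqrt (beta - r))].
    Therefore [f r] is a root in [[alpha, beta]], i.e. [f r = r]. *)

From Stdlib Require Import Reals ZArith List Lra Lia.
Open Scope R_scope.

Lemma sum_f_R0_delta (g : nat -> R) (j n : nat) : (j <= n)%nat ->
  sum_f_R0 (fun i => if Nat.eqb i j then g i else 0) n = g j.
Proof.
  induction n as [|n IH]; intros Hj.
  - assert (j = 0%nat) by lia; subst; reflexivity.
  - rewrite tech5.
    destruct (Nat.eq_dec j (S n)) as [->|Hne].
    + rewrite Nat.eqb_refl.
      rewrite (sum_eq _ (fun _ => 0)), sum_cte by
        (intros i Hi; destruct (Nat.eqb_spec i (S n)); [lia | reflexivity]).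
      ring.
    + rewrite IH by lia. destruct (Nat.eqb_spec (S n) j); [lia | ring].
Qed.

Lemma sum_f_R0_truncate (g : nat -> R) (m n : nat) : (m <= n)%nat ->
  sum_f_R0 (fun i => if Nat.leb i m then g i else 0) n = sum_f_R0 g m.
Proof.
  induction n as [|n IH]; intros Hm.
  - assert (m = 0%nat) by lia; subst; reflexivity.
  - destruct (Nat.eq_dec m (S n)) as [->|Hne].
    + apply sum_eq. intros i Hi. now rewrite (proj2 (Nat.leb_le i (S n)) Hi).
    + rewrite tech5, IH by lia. destruct (Nat.leb_spec (S n) m); [lia | ring].
Qed.

Lemma fold_right_max_ge (l : list Z) (z : Z) :
  (z <= fold_right Z.max z l)%Z /\ forall x, In x l -> (x <= fold_right Z.max z l)%Z.
Proof.
  induction l as [|a l [IHz IHl]]; simpl; split.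
  - lia.
  - tauto.
  - lia.
  - intros x [->|Hx]; [lia | specialize (IHl x Hx); lia].
Qed.

Lemma height_bound_coef n c k1 k2 l1 l2 i : (i <= n)%nat ->
  (Z.abs (c i) <= height_bound n c k1 k2 l1 l2)%Z.
Proof.
  intros Hi. apply fold_right_max_ge.
  apply (in_map (fun i => Z.abs (c i))), in_seq. lia.
Qed.

Lemma height_bound_ends n c k1 k2 l1 l2 :
  (Z.abs k1 <= height_bound n c k1 k2 l1 l2 /\ Z.abs k2 <= height_bound n c k1 k2 l1 l2 /\
   Z.abs l1 <= height_bound n c k1 k2 l1 l2 /\ Z.abs l2 <= height_bound n c k1 k2 l1 l2)%Z.
Proof.
  unfold height_bound.
  match goal with |- context [fold_right Z.max ?z ?l] =>
    destruct (fold_right_max_ge l z) as [Hz _] end.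
  lia.
Qed.

Section Conditions.

Variables (A : R -> Prop) (f : R -> R).
Hypothesis Hf : satisfies_conds A f.

Lemma conds_zero : A 0 -> f 0 = 0.
Proof.
  intros A0. destruct Hf as [_ [Hadd _]].
  pose proof (Hadd 0 0 A0 A0) as H. rewrite Rplus_0_r in H. specialize (H A0). lra.
Qed.

Lemma conds_IZR (b : Z) :
  (forall z, (Z.abs z <= b)%Z -> A (IZR z)) ->
  forall z, (Z.abs z <= b)%Z -> f (IZR z) = IZR z.
Proof.
  intros AZ z Hz. destruct Hf as [H1 [Hadd _]].
  assert (A0 : A 0) by (apply (AZ 0%Z); lia).
  assert (Hnat : forall k : nat, (Z.of_nat k <= b)%Z -> f (INR k) = INR k).
  { induction k as [|k IH]; intros Hk.
    - exact (conds_zero A0).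
    - assert (A1 : A 1) by (apply (AZ 1%Z); lia).
      assert (Ak : A (INR k)) by (rewrite INR_IZR_INZ; apply AZ; lia).
      assert (ASk : A (INR k + 1)) by (rewrite <- S_INR, INR_IZR_INZ; apply AZ; lia).
      rewrite S_INR, Hadd, IH, H1 by first [assumption | lia].
      reflexivity. }
  destruct (Z_le_gt_dec 0 z).
  - replace z with (Z.of_nat (Z.to_nat z)) by lia. rewrite <- INR_IZR_INZ. apply Hnat. lia.
  - assert (Hopp : f (IZR (- z)) = IZR (- z)).
    { replace (- z)%Z with (Z.of_nat (Z.to_nat (- z))) by lia.
      rewrite <- INR_IZR_INZ. apply Hnat. lia. }
    pose proof (Hadd (IZR z) (IZR (- z)) (AZ z Hz) (AZ (- z)%Z ltac:(lia))) as H.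
    rewrite <- plus_IZR, Z.add_opp_diag_r, conds_zero, Hopp in H by exact A0.
    specialize (H A0). rewrite opp_IZR in *. lra.
Qed.

Lemma conds_pow (x : R) (m : nat) :
  (forall j, (j <= m)%nat -> A (x ^ j)) ->
  forall j, (j <= m)%nat -> f (x ^ j) = f x ^ j.
Proof.
  intros Apow. destruct Hf as [H1 [_ Hmul]].
  induction j as [|j IH]; intros Hj.
  - apply H1, (Apow 0%nat). lia.
  - assert (Ax : A x) by (rewrite <- pow_1; apply Apow; lia).
    assert (Axj : A (x ^ j)) by (apply Apow; lia).
    assert (AxSj : A (x * x ^ j)) by (apply (Apow (S j)); lia).
    simpl. rewrite Hmul, IH by first [assumption | lia].
    reflexivity.
Qed.

Lemma conds_sum (g : nat -> R) (m : nat) :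
  (forall i, (i <= m)%nat -> A (g i)) ->
  (forall i, (i <= m)%nat -> A (sum_f_R0 g i)) ->
  f (sum_f_R0 g m) = sum_f_R0 (fun i => f (g i)) m.
Proof.
  intros Ag Asum. destruct Hf as [_ [Hadd _]].
  induction m as [|m IH]; [reflexivity|].
  simpl. rewrite Hadd, IH; auto.
  apply (Asum (S m)). lia.
Qed.

Lemma conds_ratio (b p q : Z) :
  (forall z, (Z.abs z <= b)%Z -> A (IZR z)) ->
  (Z.abs p <= b)%Z -> (Z.abs q <= b)%Z -> q <> 0%Z ->
  A (IZR p / IZR q) -> f (IZR p / IZR q) = IZR p / IZR q.
Proof.
  intros AZ Hp Hq Hq0 Apq. pose proof Hf as [_ [_ Hmul]].
  assert (Hq' : IZR q <> 0) by now apply not_0_IZR.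
  assert (Hcancel : IZR p / IZR q * IZR q = IZR p) by now field.
  pose proof (Hmul _ _ Apq (AZ q Hq)) as H.
  rewrite Hcancel, !(conds_IZR b AZ) in H by auto.
  specialize (H (AZ p Hp)).
  apply (Rmult_eq_reg_r (IZR q)); [now rewrite Hcancel | exact Hq'].
Qed.

Lemma conds_le (x y : R) :
  A x -> A y -> A (y - x) -> A (sqrt (y - x)) -> x <= y -> f x <= f y.
Proof.
  intros Ax Ay Ad As Hxy. destruct Hf as [_ [Hadd Hmul]].
  pose proof (Hmul _ _ As As) as Hsq. rewrite sqrt_sqrt in Hsq by lra.
  specialize (Hsq Ad).
  pose proof (Hadd x (y - x) Ax Ad) as Hy. replace (x + (y - x)) with y in Hy by ring.
  rewrite Hy, Hsq by exact Ay. nra.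
Qed.

End Conditions.

Section SetA.

Variables (n : nat) (bnd : Z) (r alpha beta : R).

Let A := setA n bnd r alpha beta.

Lemma setA_monomial (j : nat) (z : Z) :
  (j <= n)%nat -> (Z.abs z <= bnd)%Z -> A (IZR z * r ^ j).
Proof.
  intros Hj Hz. left. exists (fun i => if Nat.eqb i j then z else 0%Z). split.
  - intros i _. destruct (Nat.eqb i j); lia.
  - rewrite <- (sum_f_R0_delta (fun i => IZR z * r ^ i) j n Hj).
    apply sum_eq. intros i _. destruct (Nat.eqb i j); simpl; ring.
Qed.

Lemma setA_IZR (z : Z) : (Z.abs z <= bnd)%Z -> A (IZR z).
Proof.
  intros Hz. replace (IZR z) with (IZR z * r ^ 0) by (simpl; ring).
  apply setA_monomial; [lia | exact Hz].
Qed.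

Lemma setA_pow (j : nat) : (1 <= bnd)%Z -> (j <= n)%nat -> A (r ^ j).
Proof.
  intros Hb Hj. replace (r ^ j) with (IZR 1 * r ^ j) by ring.
  apply setA_monomial; [exact Hj | lia].
Qed.

Lemma setA_partial_sum (c : nat -> Z) (m : nat) :
  (forall i, (i <= n)%nat -> (Z.abs (c i) <= bnd)%Z) -> (m <= n)%nat ->
  A (sum_f_R0 (fun i => IZR (c i) * r ^ i) m).
Proof.
  intros Hc Hm.
  assert (Hb : (0 <= bnd)%Z) by (specialize (Hc 0%nat ltac:(lia)); lia).
  left. exists (fun i => if Nat.leb i m then c i else 0%Z). split.
  - intros i Hi. destruct (Nat.leb i m); [specialize (Hc i Hi)|]; lia.
  - rewrite <- (sum_f_R0_truncate _ m n Hm).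
    apply sum_eq. intros i _. destruct (Nat.leb i m); simpl; ring.
Qed.

Lemma conds_zpoly_eval (c : nat -> Z) (f : R -> R) :
  satisfies_conds A f -> (1 <= bnd)%Z ->
  (forall i, (i <= n)%nat -> (Z.abs (c i) <= bnd)%Z) ->
  f (zpoly_eval n c r) = zpoly_eval n c (f r).
Proof.
  intros Hf Hb Hc. unfold zpoly_eval.
  rewrite (conds_sum A f Hf) by
    (intros i Hi; first [apply setA_monomial | apply setA_partial_sum]; auto).
  apply sum_eq. intros i Hi.
  pose proof Hf as [_ [_ Hmul]].
  rewrite Hmul by (apply setA_IZR || apply setA_pow || apply setA_monomial; auto).
  rewrite (conds_IZR A f Hf bnd), (conds_pow A f Hf r n); auto using setA_IZR, setA_pow.
Qed.

End SetA.

Theorem mainTheorem8 (n : nat) (c : nat -> Z) (r : R) (k1 k2 l1 l2 : Z)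
  (hlead : c n <> 0%Z)
  (hroot : zpoly_eval n c r = 0)
  (hk2 : k2 <> 0%Z) (hl2 : l2 <> 0%Z)
  (hlt1 : IZR k1 / IZR k2 < r) (hlt2 : r < IZR l1 / IZR l2)
  (huniq : forall x, IZR k1 / IZR k2 <= x <= IZR l1 / IZR l2 ->
             zpoly_eval n c x = 0 -> x = r) :
  forall f : R -> R,
    satisfies_conds
      (setA n (height_bound n c k1 k2 l1 l2) r (IZR k1 / IZR k2) (IZR l1 / IZR l2)) f ->
    f r = r.
Proof.
  intros f Hf.
  pose proof (height_bound_coef n c k1 k2 l1 l2) as Hc.
  pose proof (height_bound_ends n c k1 k2 l1 l2) as Hends.
  set (a := height_bound n c k1 k2 l1 l2) in *.
  set (alpha := IZR k1 / IZR k2) in *.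
  set (beta := IZR l1 / IZR l2) in *.
  set (A := setA n a r alpha beta) in *.
  assert (Ha : (1 <= a)%Z) by (specialize (Hc n (le_n n)); lia).
  assert (Hn : (1 <= n)%nat).
  { destruct n; [|lia]. exfalso. apply hlead, eq_IZR.
    unfold zpoly_eval in hroot. simpl in hroot. lra. }
  assert (Ar : A r) by (rewrite <- pow_1; apply setA_pow; assumption).
  assert (Aalpha : A alpha) by (right; left; reflexivity).
  assert (Abeta : A beta) by (do 4 right; left; reflexivity).
  pose proof (setA_IZR n a r alpha beta) as AZ.
  assert (falpha : f alpha = alpha) by (apply (conds_ratio A f Hf a); auto; lia).
  assert (fbeta : f beta = beta) by (apply (conds_ratio A f Hf a); auto; lia).
  apply huniq.
  - split.
    + rewrite <- falpha. apply (conds_le A f Hf); try lra; try assumption.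
      * do 2 right; left; reflexivity.
      * do 3 right; left; reflexivity.
    + rewrite <- fbeta. apply (conds_le A f Hf); try lra; try assumption.
      * do 5 right; left; reflexivity.
      * do 6 right; reflexivity.
  - now rewrite <- (conds_zpoly_eval n a r alpha beta c f Hf Ha Hc), hroot,
      (conds_zero A f Hf (AZ 0%Z ltac:(lia))).
Qed.
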